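(* Let $X$ be a regular space. If $t(Q_{P}(X))=\aleph_0$, then $X$ is a Lindelöf space.
   Context: A function $f\colon X\to Y$ between topological spaces is quasi-continuous at $x\in X$ if for every open $U\ni x$ and every open $V\ni f(x)$ there is a non-empty open $G\subseteq U$ with $f(G)\subseteq V$; $f$ is quasi-continuous if it is so at every point. $Q_{P}(X)$ is the set of quasi-continuous functions $X\to\mathbb{R}$ with the topology of point-wise convergence (subspace topology from $\mathbb{R}^X$). The tightness of a space $Z$ is $t(Z)=\sup_{z\in Z} t(z,Z)$, where $t(z,Z)=\aleph_0+\sup\{a(z,A): A\subseteq Z,\ z\in\overline{A}\}$ and $a(z,A)=\min\{|B|: B\subseteq A,\ z\in\overline{B}\}$. A space is Lindelöf if every open cover has a countable subcover. *)

From HB Require Import structures.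
From mathcomp Require Import all_boot all_order all_algebra.
From mathcomp Require Import all_classical all_reals all_analysis.
Set Implicit Arguments. Unset Strict Implicit. Unset Printing Implicit Defensive.
Import Order.TTheory GRing.Theory Num.Theory numFieldNormedType.Exports.
Local Open Scope classical_set_scope.

Definition quasi_continuous_at (X Y : topologicalType) (f : X -> Y) (x : X) :=
  forall U V : set _, open U -> U x -> open V -> V (f x) ->
    exists G : set X, [/\ open G, G !=set0, G `<=` U & f @` G `<=` V].

Definition quasi_continuous (X Y : topologicalType) (f : X -> Y) :=
  forall x, quasi_continuous_at f x.

Definition QP_set (R : realType) (X : topologicalType) : set {ptws X -> R} :=
  [set f | quasi_continuous (Y := R) (f : X -> R)].


Definition countable_tightness_on (Z : topologicalType) (S : set Z) :=
  forall (z : Z) (A : set Z), S z -> A `<=` S -> closure A z ->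
    exists2 B : set Z, B `<=` A & countable B /\ closure B z.

Definition lindelof (X : topologicalType) :=
  forall F : set (set X), (forall U, F U -> open U) ->
    \bigcup_(U in F) U = setT ->
    exists2 G : set (set X), G `<=` F & countable G /\ \bigcup_(U in G) U = setT.

Definition subspace_countable_tightness (T : topologicalType) (S : set T) :=
  countable_tightness_on (S : set (subspace S)).

(* t(Q_P(X)) = aleph_0: Q_P(X) is the set of quasi-continuous functions with
   the subspace topology of R^X = {ptws X -> R} (pointwise convergence). *)
Definition QP_countable_tightness (R : realType) (X : topologicalType) :=
  @subspace_countable_tightness {ptws X -> R} (@QP_set R X).

From HB Require Import structures.
From mathcomp Require Import all_boot all_order all_algebra.
From mathcomp Require Import all_classical all_reals all_analysis.
Import Order.TTheory GRing.Theory Num.Theory numFieldNormedType.Exports.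
Local Open Scope classical_set_scope.
Local Open Scope ring_scope.

(* For an open cover F of the regular space X, let V range over the open sets
   whose closure lies in a member of F, and attach to each finite family S of
   such sets the function that is 0 on the closure of its union and 1 elsewhere.
   These functions are quasi-continuous, and the zero function lies in their
   pointwise closure since every finite set of points is covered by some S.
   Countable tightness yields countably many S such that every point lies in
   the closure of some union of S, hence in the closure of a single V, hence in
   the member of F chosen for V: a countable subcover. *)

Lemma closure_bigcup_finite {T : topologicalType} {I : Type} (D : set I)
    (F : I -> set T) : finite_set D ->
  closure (\bigcup_(i in D) F i) = \bigcup_(i in D) closure (F i).
Proof.
elim/Pchoice: I => I in D F *; move=> /finite_fsetP[{}D ->].
by rewrite !bigcup_fset (big_morph closure (@closureU T) (@closure0 T)).
Qed.

Lemma continuous_quasi_continuous {X Y : topologicalType} {f : X -> Y} :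
  continuous f -> quasi_continuous f.
Proof.
move=> cf x U V oU Ux oV Vfx; exists (U `&` f @^-1` V); split.
- by apply: openI => //; apply: open_comp => // y _; exact: cf.
- by exists x.
- exact: subIsetl.
- by move=> _ [y [_ Vfy] <-].
Qed.

Lemma quasi_continuous_indic_closureC {R : numFieldType} {X : topologicalType}
    (W : set X) : open W -> quasi_continuous (\1_(~` closure W) : X -> R).
Proof.
move=> oW x U V oU Ux oV; rewrite indicC /=.
have [clWx|nclWx] := pselect (closure W x).
- rewrite mem_set // => V0.
  have [y [Wy Uy]] : W `&` U !=set0 by apply: clWx; exact: open_nbhs_nbhs.
  exists (U `&` W); split; [exact: openI | by exists y | exact: subIsetl |].
  by move=> _ [w [_ /subset_closure/mem_set Ww] <-]; rewrite Ww.
- rewrite memNset // => V1.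
  exists (U `&` ~` closure W); split; [|by exists x|exact: subIsetl|].
    by apply: openI; rewrite // openC; exact: closed_closure.
  by move=> _ [w [_ nWw] <-]; rewrite memNset.
Qed.

Lemma ptws_closure_finite_agree {X : topologicalType} {Y : uniformType}
    (A : set {ptws X -> Y}) (f : {ptws X -> Y}) :
  (forall k : set X, finite_set k ->
    exists2 g, A g & k `<=` [set x | g x = f x]) ->
  closure A f.
Proof.
move=> agree.
pose D k := A `&` [set g : {ptws X -> Y} | k `<=` [set x | g x = f x]].
have PG : ProperFilter (filter_from finite_set D).
  apply: filter_from_proper => [|k /agree[g Ag kg]]; last by exists g.
  apply: filter_from_filter => [|k1 k2 k1fin k2fin]; first by exists set0.
  exists (k1 `|` k2); first by rewrite finite_setU.
  by move=> g [Ag k12g]; split; split => // x kx; apply: k12g; [left|right].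
have Gf : filter_from finite_set D --> f.
  apply/(@pointwise_cvgP X Y _ f PG) => t P /= Pft.
  exists [set t]; first exact: finite_set1.
  by move=> g [_ /(_ t erefl) /= ->]; exact: nbhs_singleton.
move=> B /Gf[k kfin DkB].
by have [g Ag kg] := agree k kfin; exists g; split => //; apply: DkB.
Qed.

Lemma ptws_closure_eval {X : eqType} {Y : topologicalType}
    {A : set {ptws X -> Y}} {f : {ptws X -> Y}} (x : X) {U : set Y} :
  closure A f -> nbhs (f x) U -> exists2 g, A g & U (g x).
Proof.
by move=> clAf /(@proj_continuous _ _ x f)/clAf[g [Ag Ugx]]; exists g.
Qed.

Lemma countable_image_preimage {T U : Type} {f : T -> U} {A : set T}
    {B : set U} : B `<=` f @` A -> countable B ->
  exists2 C, C `<=` A & countable C /\ f @` C = B.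
Proof.
elim/Ppointed: T => T in f A *.
  move=> BfA _; exists set0 => //; split=> //.
  by apply/seteqP; split=> u; [case=> t | move=> /BfA[t]]; case: (no t).
move=> BfA cB; have /choice[g gP] : forall u, exists t, B u -> A t /\ f t = u.
  move=> u; have [Bu|nBu] := pselect (B u); last by exists point.
  by have [t At ftu] := BfA u Bu; exists t.
exists (g @` B); first by move=> _ [u Bu <-]; exact: (gP u Bu).1.
split; first exact: card_le_trans (card_image_le _ _) cB.
apply/seteqP; split=> [_ [_ [u Bu <-] <-]|u Bu]; first by rewrite (gP u Bu).2.
by exists (g u); [exists u | exact: (gP u Bu).2].
Qed.

Lemma finite_subfamily_cover {T : Type} {V : set (set T)} {k : set T} :
  \bigcup_(W in V) W = setT -> finite_set k ->
  exists2 S, finite_set S /\ S `<=` V & k `<=` \bigcup_(W in S) W.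
Proof.
move=> Vcover kfin.
have /choice[W WP] : forall x, exists W, V W /\ W x.
  move=> x; have : (\bigcup_(W in V) W) x by rewrite Vcover.
  by case=> W VW Wx; exists W.
exists (W @` k).
  by split; [exact: finite_image | move=> _ [x _ <-]; exact: (WP x).1].
by move=> x kx; exists (W x); [exists x | exact: (WP x).2].
Qed.

Section closure_refinement.
Context {X : topologicalType}.

Definition closure_refinement (F : set (set X)) :=
  [set V | open V /\ exists2 U, F U & closure V `<=` U].

Lemma regular_closure_refinement_cover {F : set (set X)} :
  regular_space X -> (forall U, F U -> open U) ->
  \bigcup_(U in F) U = setT -> \bigcup_(V in closure_refinement F) V = setT.
Proof.
move=> reg Fopen Fcover; apply/seteqP; split=> // x _.
have : (\bigcup_(U in F) U) x by rewrite Fcover.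
case=> U FU Ux.
have [W Wx clWU] := reg x U (open_nbhs_nbhs (conj (Fopen U FU) Ux)).
exists W°; last exact: Wx.
split; first exact: open_interior.
exists U => //; apply: subset_trans clWU.
by apply: closureS; exact: interior_subset.
Qed.

Lemma countable_subcover_of_closures {F : set (set X)}
    {C : set (set (set X))} : countable C ->
  (forall S, C S -> finite_set S /\ S `<=` closure_refinement F) ->
  \bigcup_(S in C) closure (\bigcup_(V in S) V) = setT ->
  exists2 G, G `<=` F & countable G /\ \bigcup_(U in G) U = setT.
Proof.
move=> cC CS Ccover.
have /choice[U UP] : forall V, exists U, closure_refinement F V ->
    F U /\ closure V `<=` U.
  move=> V; have [[_ [U FU clVU]]|nFV] := pselect (closure_refinement F V).
    by exists U.
  by exists set0 => /nFV.
have refC : \bigcup_(S in C) S `<=` closure_refinement F.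
  by move=> V [S /CS[_ SF] SV]; exact: SF.
exists (U @` \bigcup_(S in C) S).
  by move=> _ [V /refC/UP[FUV _] <-].
split.
  apply: card_le_trans (card_image_le _ _) _.
  by apply: bigcup_countable => // S /CS[Sfin _]; exact: finite_set_countable.
apply/seteqP; split=> // x _.
have : (\bigcup_(S in C) closure (\bigcup_(V in S) V)) x by rewrite Ccover.
case=> S CSx; have [Sfin _] := CS S CSx.
rewrite closure_bigcup_finite // => -[V SV clVx].
have CV : (\bigcup_(S in C) S) V by exists S.
by exists (U V); [exists V | exact: (UP V (refC V CV)).2].
Qed.

End closure_refinement.

Section coclosure_indic.
Context {R : realType} {X : topologicalType}.

Definition coclosure_indic (S : set (set X)) : {ptws X -> R} :=
  \1_(~` closure (\bigcup_(V in S) V)).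

Lemma coclosure_indicE S x :
  coclosure_indic S x = (x \notin closure (\bigcup_(V in S) V))%:R.
Proof. by rewrite /coclosure_indic indicC. Qed.

Lemma QP_coclosure_indic S : (forall V, S V -> open V) ->
  @QP_set R X (coclosure_indic S).
Proof. by move=> Sopen; apply/quasi_continuous_indic_closureC/bigcup_open. Qed.

Lemma finite_cover_closure_coclosure_indic (V : set (set X)) :
  \bigcup_(W in V) W = setT ->
  closure (coclosure_indic @` [set S | finite_set S /\ S `<=` V]) (cst 0).
Proof.
move=> Vcover; apply: ptws_closure_finite_agree => k kfin.
have [S SV kS] := finite_subfamily_cover Vcover kfin.
exists (coclosure_indic S); first by exists S.
by move=> x /kS/subset_closure/mem_set clx; rewrite /= coclosure_indicE clx.
Qed.

Lemma closure_coclosure_indic_cover (C : set (set (set X))) :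
  closure (coclosure_indic @` C) (cst 0) ->
  \bigcup_(S in C) closure (\bigcup_(V in S) V) = setT.
Proof.
move=> clC; apply/seteqP; split=> // x _.
have [_ [S CS <-]] := ptws_closure_eval x clC (lt_nbhsl (@ltr01 R)).
rewrite coclosure_indicE; case: (boolP (x \in _)) => [/set_mem clx _|_].
  by exists S.
by rewrite ltxx.
Qed.

End coclosure_indic.

Theorem mainTheorem3 (R : realType) (X : topologicalType) :
  regular_space X -> hausdorff_space X ->
  QP_countable_tightness R X ->
  lindelof X.
Proof.
move=> reg _ tight F Fopen Fcover.
pose fam := [set S | finite_set S /\ S `<=` closure_refinement F].
have famQP : coclosure_indic @` fam `<=` @QP_set R X.
  by move=> _ [S [_ SF] <-]; apply: QP_coclosure_indic => V /SF[].
have QP0 : @QP_set R X (cst 0).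
  exact: continuous_quasi_continuous (@cst_continuous X R 0).
have clfam :
    closure (coclosure_indic @` fam : set (subspace (@QP_set R X))) (cst 0).
  rewrite closure_subspaceW //; split => //.
  exact/finite_cover_closure_coclosure_indic/regular_closure_refinement_cover.
have [B Bfam [cB]] := tight _ _ QP0 famQP clfam.
rewrite closure_subspaceW => [[clB _]|]; last exact: subset_trans famQP.
have [C Cfam [cC CB]] := countable_image_preimage Bfam cB.
apply: (countable_subcover_of_closures cC) => [S /Cfam //|].
by apply: (@closure_coclosure_indic_cover R); rewrite CB.
Qed.
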